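(* Let $n\geq 1$, $r\geq 1$, $q\geq 2$, and fix an initial configuration of room states. If $n$ prisoners do not have a winning strategy for $r$ rooms with $q$ states (from this initial configuration), then $n+1$ prisoners do not have a winning strategy for $r$ rooms with $q$ states (from this initial configuration).
   Context: The game: there are $n$ prisoners and $r$ rooms; each room contains a switch that is in one of $q$ states $\{0,1,\ldots,q-1\}$. The initial state of every room is known to the prisoners. A warden leads prisoners into rooms one at a time according to a schedule, i.e. an infinite sequence of (prisoner, room) pairs; a schedule is valid if every prisoner visits every room infinitely often. The rooms are indistinguishable to the prisoners, and prisoners have no information about time or other visits: on each visit a prisoner observes only the current state of the room, may change it to any state, and may declare that all prisoners have visited all rooms. A (deterministic) strategy assigns to each prisoner a rule determining, from the sequence of states that prisoner has observed so far (and their own previous actions), what new state to set and whether to declare. A strategy is winning if for every valid schedule some prisoner eventually declares, and every declaration is made only at a time when every prisoner has already visited every room. Strategies may differ between prisoners. *)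

From mathcomp Require Import all_boot.
Set Implicit Arguments. Unset Strict Implicit. Unset Printing Implicit Defensive.

(* Prisoners 'I_n, rooms 'I_r, switch states 'I_q = {0,...,q-1}. *)

(* A schedule: at time t the warden leads prisoner (sched t).1 into room (sched t).2. *)
Definition schedule (n r : nat) := nat -> 'I_n * 'I_r.

Definition valid_schedule (n r : nat) (s : schedule n r) : Prop :=
  forall (p : 'I_n) (rm : 'I_r) (N : nat), exists t, N <= t /\ s t = (p, rm).

(* A deterministic strategy: each prisoner, given the sequence of states it has
   observed so far (the last one being the current room's state), chooses the
   new state of the room and whether to declare.  (Its own previous actions are
   determined by its previous observations, since the strategy is deterministic.) *)
Definition strategy (n q : nat) := 'I_n -> seq 'I_q -> 'I_q * bool.

(* Global game state before time t: room configuration and each prisoner's history. *)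
Fixpoint game_state (n r q : nat) (init : 'I_r -> 'I_q) (S : strategy n q)
    (s : schedule n r) (t : nat) : ('I_r -> 'I_q) * ('I_n -> seq 'I_q) :=
  match t with
  | 0 => (init, fun _ => [::])
  | t'.+1 =>
      let: (c, h) := game_state init S s t' in
      let: (p, rm) := s t' in
      let hp := rcons (h p) (c rm) in
      ((fun x => if x == rm then (S p hp).1 else c x),
       (fun y => if y == p then hp else h y))
  end.

Definition declares (n r q : nat) (init : 'I_r -> 'I_q) (S : strategy n q)
    (s : schedule n r) (t : nat) : bool :=
  let: (c, h) := game_state init S s t in
  let: (p, rm) := s t in
  (S p (rcons (h p) (c rm))).2.

Definition all_visited (n r : nat) (s : schedule n r) (t : nat) : Prop :=
  forall (p : 'I_n) (rm : 'I_r), exists t', t' <= t /\ s t' = (p, rm).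

Definition winning (n r q : nat) (init : 'I_r -> 'I_q) (S : strategy n q) : Prop :=
  forall s : schedule n r, valid_schedule s ->
    (exists t, declares init S s t) /\
    (forall t, declares init S s t -> all_visited s t).

Definition has_winning_strategy (n r q : nat) (init : 'I_r -> 'I_q) : Prop :=
  exists S : strategy n q, winning init S.
Arguments has_winning_strategy n r q init : clear implicits.

From mathcomp Require Import all_boot.
Set Implicit Arguments. Unset Strict Implicit. Unset Printing Implicit Defensive.

(* Given a winning strategy for n+1 prisoners, let prisoner 0 of an n-prisoner
   game play two roles on each visit: first prisoner 0 of the large game, then,
   in the same room, the extra prisoner.  The extra prisoner's observations are
   exactly the states prisoner 0 wrote, so prisoner 0 can reconstruct them.  A
   schedule for n prisoners thus becomes a valid schedule for n+1 prisoners in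
   which each visit of prisoner 0 is followed by a visit of the extra prisoner;
   both games run in lockstep, so the small game declares exactly when the large
   one does, and a correct declaration in the large game is correct in the
   small one, whose prisoners are among those of the large game. *)

Lemma game_state_succ n r q (init : 'I_r -> 'I_q) (S : strategy n q)
    (s : schedule n r) t :
  game_state init S s t.+1 =
  (let c := (game_state init S s t).1 in let h := (game_state init S s t).2 in
   let hp := rcons (h (s t).1) (c (s t).2) in
   ((fun x => if x == (s t).2 then (S (s t).1 hp).1 else c x),
    (fun y => if y == (s t).1 then hp else h y))).
Proof. by rewrite /=; case: (game_state _ _ _ t) => c h; case: (s t). Qed.

Lemma declaresE n r q (init : 'I_r -> 'I_q) (S : strategy n q) (s : schedule n r) t :
  declares init S s t =
  (let c := (game_state init S s t).1 in let h := (game_state init S s t).2 in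
   (S (s t).1 (rcons (h (s t).1) (c (s t).2))).2).
Proof. by rewrite /declares; case: (game_state _ _ _ t) => c h; case: (s t). Qed.

Section AbsorbLast.
Variables (m r q : nat) (init : 'I_r -> 'I_q) (S : strategy m.+2 q).

Local Notation old := (@lift m.+2 ord_max).
Local Notation host := (old ord0).

Definition twin_history (h : seq 'I_q) : seq 'I_q :=
  mkseq (fun i => (S host (take i.+1 h)).1) (size h).

Lemma twin_history_rcons h x :
  twin_history (rcons h x) = rcons (twin_history h) (S host (rcons h x)).1.
Proof.
rewrite /twin_history /mkseq size_rcons -[(size h).+1]addn1 iotaD map_cat /= -!cats1 add0n.
congr (_ ++ [:: _]); last by rewrite take_oversize // size_cat addn1.
by apply/eq_in_map => i; rewrite mem_iota => /andP[_ lt_ih]; rewrite takel_cat.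
Qed.

Definition absorb_last : strategy m.+1 q := fun p h =>
  if p == ord0 then
    ((S ord_max (twin_history h)).1, (S host h).2 || (S ord_max (twin_history h)).2)
  else S (old p) h.

Section Schedule.
Variable s : schedule m.+1 r.

(* [split_time u = (t, b)]: time [u] of the large game replays the visit of
   time [t] of [s], played by the extra prisoner iff [b]. *)
Fixpoint split_time (u : nat) : nat * bool :=
  if u is u'.+1 then
    let: (t, twin) := split_time u' in
    if ~~ twin && ((s t).1 == ord0) then (t, true) else (t.+1, false)
  else (0, false).

Definition split_schedule : schedule m.+2 r := fun u =>
  let: (t, twin) := split_time u in
  (if twin then ord_max else old (s t).1, (s t).2).

Lemma split_time_next u t : split_time u = (t, false) ->
  split_time u.+1 = if (s t).1 == ord0 then (t, true) else (t.+1, false).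
Proof. by move=> /= ->. Qed.

Lemma split_time_after_twin u t : split_time u = (t, true) ->
  split_time u.+1 = (t.+1, false).
Proof. by move=> /= ->. Qed.

Lemma split_time_twin u t : split_time u = (t, true) ->
  exists2 u', u = u'.+1 & split_time u' = (t, false) /\ (s t).1 = ord0.
Proof.
case: u => [//|u] /=; case Eu: (split_time u) => [t' [|]] //=.
by case: eqP => // host_t' [<-]; exists u.
Qed.

Lemma split_schedule_old u t : split_time u = (t, false) ->
  split_schedule u = (old (s t).1, (s t).2).
Proof. by rewrite /split_schedule => ->. Qed.

Lemma split_schedule_twin u t : split_time u = (t, true) ->
  split_schedule u = (ord_max, (s t).2).
Proof. by rewrite /split_schedule => ->. Qed.

Lemma split_time_surj t : exists2 u, t <= u & split_time u = (t, false).
Proof.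
elim: t => [|t [u le_tu Eu]]; first by exists 0.
case host_t: ((s t).1 == ord0).
  exists u.+2; first by rewrite ltnS ltnW.
  by apply: split_time_after_twin; rewrite (split_time_next Eu) host_t.
by exists u.+1; rewrite // (split_time_next Eu) host_t.
Qed.

Lemma split_time_homo : {homo (fun u => (split_time u).1) : u v / u <= v}.
Proof.
apply: (homo_leq leqnn leq_trans) => u.
by rewrite /=; case: (split_time u) => t b; case: ifP.
Qed.

Lemma valid_split_schedule : valid_schedule s -> valid_schedule split_schedule.
Proof.
move=> valid_s p rm N; case: (unliftP ord_max p) => [p' ->|->].
  have [t [le_Nt s_t]] := valid_s p' rm N.
  have [u le_tu Eu] := split_time_surj t.
  by exists u; rewrite (leq_trans le_Nt le_tu) (split_schedule_old Eu) s_t.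
have [t [le_Nt s_t]] := valid_s ord0 rm N.
have [u le_tu Eu] := split_time_surj t.
exists u.+1; split; first by rewrite (leq_trans le_Nt (leq_trans le_tu (leqnSn u))).
by rewrite (@split_schedule_twin _ t) ?(split_time_next Eu) s_t ?eqxx.
Qed.

Lemma all_visited_split_schedule v :
  all_visited split_schedule v -> all_visited s (split_time v).1.
Proof.
move=> visited p rm; have [u [le_uv]] := visited (old p) rm.
rewrite /split_schedule; case Eu: (split_time u) => [t [|]] /pair_equal_spec[].
  by move/eqP; rewrite (negbTE (neq_lift _ _)).
move=> /lift_inj <- <-; exists t; rewrite -surjective_pairing; split=> //.
by have := split_time_homo le_uv; rewrite Eu.
Qed.

Definition simulates t u :=
  let R := game_state init absorb_last s t in
  let Q := game_state init S split_schedule u in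
  [/\ R.1 =1 Q.1, forall p, R.2 p = Q.2 (old p)
    & Q.2 ord_max = twin_history (R.2 ord0)].

Lemma simulates_step_old t u : split_time u = (t, false) -> (s t).1 != ord0 ->
  simulates t u ->
  simulates t.+1 u.+1 /\ declares init absorb_last s t = declares init S split_schedule u.
Proof.
move=> Eu old_t [Ec Eh Emax].
rewrite /simulates !game_state_succ !declaresE (split_schedule_old Eu) /=.
rewrite /absorb_last (negbTE old_t) Eh Ec; split=> //; split=> /=.
- by move=> x; rewrite Ec.
- by move=> y; rewrite (inj_eq lift_inj); case: eqP => // _; rewrite Eh Ec.
- by rewrite (negbTE (neq_lift _ _)) eq_sym (negbTE old_t).
Qed.

Lemma simulates_step_host t u : split_time u = (t, false) -> (s t).1 = ord0 ->
  simulates t u ->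
  simulates t.+1 u.+2 /\ declares init absorb_last s t =
    declares init S split_schedule u || declares init S split_schedule u.+1.
Proof.
move=> Eu host_t [Ec Eh Emax].
have Eu1 : split_time u.+1 = (t, true) by rewrite (split_time_next Eu) host_t eqxx.
rewrite /simulates !game_state_succ !declaresE !game_state_succ.
rewrite (split_schedule_old Eu) (split_schedule_twin Eu1) /= host_t /absorb_last eqxx /=.
rewrite eqxx Emax (Eh ord0) (Ec (s t).2) -twin_history_rcons.
split=> //; split=> /=.
- by move=> x; case: eqP => // _; rewrite Ec.
- move=> y; rewrite [old y == _]eq_sym (negbTE (neq_lift _ _)) (inj_eq lift_inj).
  by case: eqP => // ->.
- by rewrite eqxx.
Qed.

Lemma simulates_split_time u t : split_time u = (t, false) -> simulates t u.
Proof.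
elim/ltn_ind: u t => -[|u] IH t; first by case=> <-.
case Eu: (split_time u) => [t' [|]].
  rewrite (split_time_after_twin Eu) => -[<-].
  have [u' def_u [Eu' host_t']] := split_time_twin Eu.
  have sim : simulates t' u' by apply: IH Eu'; rewrite def_u.
  by rewrite def_u; case: (simulates_step_host Eu' host_t' sim).
rewrite (split_time_next Eu); case: eqP => // old_t' [<-].
by case: (simulates_step_old Eu (introN eqP old_t') (IH u (ltnSn u) _ Eu)).
Qed.

Lemma declares_absorb_last t :
  declares init absorb_last s t <->
  exists2 u, (split_time u).1 = t & declares init S split_schedule u.
Proof.
split.
  have [u _ Eu] := split_time_surj t; have sim := simulates_split_time Eu.
  case: (eqVneq (s t).1 ord0) => [host_t|old_t].
    case: (simulates_step_host Eu host_t sim) => _ -> /orP[decl|decl].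
      by exists u; rewrite ?Eu.
    by exists u.+1; rewrite // (split_time_next Eu) host_t eqxx.
  by case: (simulates_step_old Eu old_t sim) => _ ->; exists u; rewrite ?Eu.
case=> u; case Eu: (split_time u) => [t' [|]] /= <- decl.
  have [u' def_u [Eu' host_t']] := split_time_twin Eu; move: decl; rewrite def_u.
  case: (simulates_step_host Eu' host_t' (simulates_split_time Eu')) => _ ->.
  by move=> ->; rewrite orbT.
have sim := simulates_split_time Eu; case: (eqVneq (s t').1 ord0) => [host_t|old_t].
  by case: (simulates_step_host Eu host_t sim) => _ ->; rewrite decl.
by case: (simulates_step_old Eu old_t sim) => _ ->.
Qed.

End Schedule.

Lemma absorb_last_winning : winning init S -> winning init absorb_last.
Proof.
move=> win_S s valid_s.
have [[u decl] correct] := win_S _ (valid_split_schedule valid_s).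
split.
  by exists (split_time s u).1; apply/declares_absorb_last; exists u.
move=> t /declares_absorb_last[v <- decl_v].
exact/all_visited_split_schedule/correct.
Qed.

End AbsorbLast.

Theorem mainTheorem3 (n r q : nat) (hn : 1 <= n) (hr : 1 <= r) (hq : 2 <= q)
    (init : 'I_r -> 'I_q) :
  ~ has_winning_strategy n r q init -> ~ has_winning_strategy n.+1 r q init.
Proof.
case: n hn => [//|m] _ no_win [S win_S]; apply: no_win.
by exists (absorb_last S); apply: absorb_last_winning.
Qed.
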